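(* On a normal almost contact manifold $(M,\phi,\xi,\eta)$, the set $\mathfrak{hol}(M)$ of contact-holomorphic vector fields is a Lie subalgebra of the Lie algebra $\Gamma(TM)$ of vector fields.
   Context: An almost contact structure on a $(2n+1)$-manifold is $(\phi,\xi,\eta)$ with $\phi$ a $(1,1)$-tensor, $\xi$ a vector field, $\eta$ a 1-form, $\phi^2=-I+\eta\otimes\xi$, $\eta(\xi)=1$. It is normal if $[\phi,\phi](X,Y)+2d\eta(X,Y)\xi=0$, where $[\phi,\phi](X,Y)=\phi^2[X,Y]+[\phi X,\phi Y]-\phi[\phi X,Y]-\phi[X,\phi Y]$ and $d\eta(X,Y)=\frac12(X\eta(Y)-Y\eta(X)-\eta([X,Y]))$. A (local) vector field $X$ is contact-holomorphic if $(\mathcal{L}_X\phi)Y=\eta([X,\phi Y])\xi$ for all vector fields $Y$. *)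

From HB Require Import structures.
From mathcomp Require Import all_boot all_order all_algebra.
From mathcomp Require Import all_classical all_reals all_analysis.
Set Implicit Arguments. Unset Strict Implicit. Unset Printing Implicit Defensive.
Import Order.TTheory GRing.Theory Num.Theory.
Import numFieldNormedType.Exports.
Local Open Scope classical_set_scope.
Local Open Scope ring_scope.

Section Euclid.
Context {R : realType} {m : nat} {V : normedModType R}.

Fixpoint iterD (vs : seq 'rV[R]_m) (f : 'rV[R]_m -> V) : 'rV[R]_m -> V :=
  match vs with
  | [::] => f
  | v :: vs' => 'D_v (iterD vs' f)
  end.

Definition smooth_on (U : set 'rV[R]_m) (f : 'rV[R]_m -> V) : Prop :=
  open U /\ forall (vs : seq 'rV[R]_m) (x : 'rV[R]_m), U x -> differentiable (iterD vs f) x.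
End Euclid.

Record smooth_atlas (R : realType) (m : nat) (M : topologicalType) := SmoothAtlas {
  cidx : Type;
  cdom : cidx -> set M;
  cfwd : cidx -> M -> 'rV[R]_m;
  cbwd : cidx -> 'rV[R]_m -> M;
  cdom_open : forall i, open (cdom i);
  ccover : forall p : M, exists i, cdom i p;
  cimg_open : forall i, open (cfwd i @` cdom i);
  cbwd_fwd : forall i p, cdom i p -> cbwd i (cfwd i p) = p;
  cfwd_cont : forall i, {within cdom i, continuous (cfwd i)};
  cbwd_cont : forall i, {within cfwd i @` cdom i, continuous (cbwd i)};
  ctrans : forall i j,
    smooth_on (cfwd i @` (cdom i `&` cdom j)) (cfwd j \o cbwd i)
}.

Section OnManifold.
Context {R : realType} {m : nat} {M : topologicalType} (A : smooth_atlas R m M).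

Definition smooth (f : M -> R) : Prop :=
  forall i, smooth_on (@cfwd _ _ _ A i @` @cdom _ _ _ A i) (f \o @cbwd _ _ _ A i).

(* vector fields: derivations of C^oo(M), normalized to vanish on
   non-smooth functions (so that each derivation has a unique representative) *)
Definition vfield := (M -> R) -> (M -> R).

Definition is_vf (X : vfield) : Prop :=
  [/\ forall g, ~ smooth g -> X g = (fun _ => 0),
      forall g, smooth g -> smooth (X g),
      forall (a : R) g h, smooth g -> smooth h ->
        X (fun x => a * g x + h x) = (fun x => a * X g x + X h x)
    & forall g h, smooth g -> smooth h ->
        X (fun x => g x * h x) = (fun x => g x * X h x + h x * X g x)].

Definition vzero : vfield := fun _ _ => 0.
Definition vadd (X Y : vfield) : vfield := fun g x => X g x + Y g x.
Definition vopp (X : vfield) : vfield := fun g x => - X g x.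
Definition rscale (c : R) (X : vfield) : vfield := fun g x => c * X g x.
Definition vscale (f : M -> R) (X : vfield) : vfield := fun g x => f x * X g x.
Definition vbr (X Y : vfield) : vfield := fun g x => X (Y g) x - Y (X g) x.

Definition is_tensor11 (phi : vfield -> vfield) : Prop :=
  (forall X, is_vf X -> is_vf (phi X)) /\
  (forall f X Y, smooth f -> is_vf X -> is_vf Y ->
     phi (vadd (vscale f X) Y) = vadd (vscale f (phi X)) (phi Y)).

Definition is_1form (eta : vfield -> (M -> R)) : Prop :=
  (forall X, is_vf X -> smooth (eta X)) /\
  (forall f X Y, smooth f -> is_vf X -> is_vf Y ->
     eta (vadd (vscale f X) Y) = (fun x => f x * eta X x + eta Y x)).

Definition almost_contact (phi : vfield -> vfield) (xi : vfield)
    (eta : vfield -> (M -> R)) : Prop :=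
  [/\ is_tensor11 phi, is_vf xi, is_1form eta,
      forall X, is_vf X -> phi (phi X) = vadd (vopp X) (vscale (eta X) xi)
    & eta xi = (fun _ => 1)].

Definition nijenhuis (phi : vfield -> vfield) (X Y : vfield) : vfield :=
  vadd (vadd (phi (phi (vbr X Y))) (vbr (phi X) (phi Y)))
       (vadd (vopp (phi (vbr (phi X) Y))) (vopp (phi (vbr X (phi Y))))).

Definition deta (eta : vfield -> (M -> R)) (X Y : vfield) : M -> R :=
  fun x => 2^-1 * (X (eta Y) x - Y (eta X) x - eta (vbr X Y) x).

Definition normal_ac (phi : vfield -> vfield) (xi : vfield)
    (eta : vfield -> (M -> R)) : Prop :=
  forall X Y, is_vf X -> is_vf Y ->
    vadd (nijenhuis phi X Y) (vscale (fun x => 2 * deta eta X Y x) xi) = vzero.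

Definition lie_phi (phi : vfield -> vfield) (X Y : vfield) : vfield :=
  vadd (vbr X (phi Y)) (vopp (phi (vbr X Y))).

Definition contact_hol (phi : vfield -> vfield) (xi : vfield)
    (eta : vfield -> (M -> R)) (X : vfield) : Prop :=
  is_vf X /\
  forall Y, is_vf Y -> lie_phi phi X Y = vscale (eta (vbr X (phi Y))) xi.

Definition lie_subalgebra (S : vfield -> Prop) : Prop :=
  [/\ forall X, S X -> is_vf X,
      S vzero,
      forall X Y, S X -> S Y -> S (vadd X Y),
      forall (c : R) X, S X -> S (rscale c X)
    & forall X Y, S X -> S Y -> S (vbr X Y)].
End OnManifold.

(* Write (L_X phi) Y := [X, phi Y] - phi [X, Y]. Since eta vanishes on the
   image of phi and eta xi = 1, a vector field X is contact-holomorphic iff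
   (L_X phi) Y is a smooth multiple of xi for every Y. Such multiples are stable
   under sums and under [X, -] as soon as [X, xi] is itself a multiple of xi,
   which holds for holomorphic X because phi [X, xi] = - (L_X phi) xi.
   Closure under brackets then follows from L_[X,Z] phi = [L_X, L_Z] phi, i.e.
   from the Jacobi identity. *)

From Pilot Require Import Defs.
From HB Require Import structures.
From mathcomp Require Import all_boot all_order all_algebra.
From mathcomp Require Import all_classical all_reals all_analysis.
From mathcomp Require Import ring lra.

Set Implicit Arguments. Unset Strict Implicit. Unset Printing Implicit Defensive.
Import Order.TTheory GRing.Theory Num.Theory.
Import numFieldNormedType.Exports.
Local Open Scope classical_set_scope.
Local Open Scope ring_scope.

Local Notation iterD := Defs.iterD.

Lemma near_eq_differentiable (R : numFieldType) (V W : normedModType R)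
    (f g : V -> W) (x : V) :
  (\forall y \near x, f y = g y) -> differentiable f x -> differentiable g x.
Proof.
move=> fg df.
have E : g \o shift x = cst (g x) + 'd f x +o_ 0 id.
  have /eqaddoP dfx := diff_locally df.
  apply/eqaddoP => eps eps0; have := dfx eps eps0.
  have fg0 : \forall h \near (0 : V), f (h + x) = g (h + x).
    rewrite (near_shift x) /=; near=> y; by rewrite /= sub0r subrK; near: y.
  have fgx : f x = g x := nbhs_singleton fg.
  by apply: filterS2 fg0 => h fgh; rewrite !fctE /= fgx fgh.
apply/diff_locallyP.
by rewrite (diff_unique (diff_continuous df) E); split => //; exact: diff_continuous.
Unshelve. all: by end_near.
Qed.

Lemma iterD_rcons (R : realType) (m : nat) (V : normedModType R)
    (vs : seq 'rV[R]_m) v (f : 'rV[R]_m -> V) :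
  iterD (rcons vs v) f = iterD vs ('D_v f).
Proof. by elim: vs => //= w vs ->. Qed.

Section DifferentiableUpto.
Context {R : realType} {m : nat} {V : normedModType R}.
Local Notation E := 'rV[R]_m.
Variable U : set E.
Hypothesis oU : open U.

Let near_U x : U x -> \forall y \near x, U y.
Proof. by move=> Ux; exact: (open_nbhs_nbhs (conj oU Ux)). Qed.

Lemma iterD_eq_on vs (f g : E -> V) : (forall x, U x -> f x = g x) ->
  forall x, U x -> iterD vs f x = iterD vs g x.
Proof.
move=> fg; elim: vs => [|v vs IH] x Ux //=; first exact: fg.
by apply: near_eq_derive; apply: filterS (near_U Ux); exact: IH.
Qed.

Lemma differentiable_eq_on (f g : E -> V) x : (forall y, U y -> f y = g y) ->
  U x -> differentiable f x -> differentiable g x.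
Proof.
by move=> fg Ux; apply: near_eq_differentiable; apply: filterS (near_U Ux).
Qed.

Definition differentiable_upto k (f : E -> V) :=
  forall vs : seq E, (size vs <= k)%N -> forall x, U x -> differentiable (iterD vs f) x.

Lemma differentiable_upto_derive k v (f : E -> V) :
  differentiable_upto k.+1 f -> differentiable_upto k ('D_v f).
Proof. by move=> df vs sz x Ux; rewrite -iterD_rcons; apply: df => //; rewrite size_rcons. Qed.

Lemma iterD_add k (f g : E -> V) :
  differentiable_upto k f -> differentiable_upto k g ->
  forall vs, (size vs <= k)%N -> forall x, U x ->
    iterD vs (f + g) x = iterD vs f x + iterD vs g x.
Proof.
move=> df dg; elim=> [|v vs IH] //= sz x Ux.
have sz' : (size vs <= k)%N by apply: leq_trans sz; exact: leqnSn.
rewrite (@near_eq_derive _ _ _ _ (iterD vs f + iterD vs g)); last first.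
  by apply: filterS (near_U Ux) => y Uy; exact: IH.
by rewrite deriveD //; apply: diff_derivable; [exact: df | exact: dg].
Qed.

Lemma differentiable_uptoD k (f g : E -> V) :
  differentiable_upto k f -> differentiable_upto k g -> differentiable_upto k (f + g).
Proof.
move=> df dg vs sz x Ux.
apply: (@differentiable_eq_on (iterD vs f + iterD vs g)) => //.
  by move=> y Uy; rewrite (iterD_add df dg).
by apply: differentiableD; [exact: df | exact: dg].
Qed.

Lemma differentiable_upto_cst k (c : V) : differentiable_upto k (cst c).
Proof.
have iterD_cst vs : exists c' : V, iterD vs (cst c : E -> V) = cst c'.
  elim: vs => [|v vs [c' IH]] /=; first by exists c.
  by exists 0; rewrite IH; apply/funext => y; exact: derive_cst.
by move=> vs _ x _; have [c' ->] := iterD_cst vs; exact: differentiable_cst.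
Qed.

End DifferentiableUpto.

Section DifferentiableUptoM.
Context {R : realType} {m : nat}.
Local Notation E := 'rV[R]_m.
Variable U : set E.
Hypothesis oU : open U.

Lemma differentiable_uptoM k (f g : E -> R^o) :
  (forall k, differentiable_upto U k f) -> (forall k, differentiable_upto U k g) ->
  differentiable_upto U k (f * g).
Proof.
have dfg0 (f' g' : E -> R^o) : (forall k, differentiable_upto U k f') ->
    (forall k, differentiable_upto U k g') -> forall x, U x -> differentiable (f' * g') x.
  by move=> df dg x Ux; apply: differentiableM; [exact: (df 0%N [::]) | exact: (dg 0%N [::])].
elim: k f g => [|k IH] f g df dg vs.
  by case: vs => //= _; exact: dfg0.
case/lastP: vs => [|vs v] sz x Ux; first exact: dfg0.
have Leibniz y : U y -> 'D_v (f * g) y = (f * 'D_v g + g * 'D_v f) y.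
  by move=> Uy; rewrite deriveM //; apply/diff_derivable;
    [exact: (df 0%N [::]) | exact: (dg 0%N [::])].
have dfD k' := differentiable_upto_derive v (df k'.+1).
have dgD k' := differentiable_upto_derive v (dg k'.+1).
rewrite size_rcons ltnS in sz; rewrite iterD_rcons.
apply: (@differentiable_eq_on _ _ _ _ oU (iterD vs (f * 'D_v g + g * 'D_v f)) _ _ _ Ux).
  by apply: (iterD_eq_on oU) => y Uy; rewrite Leibniz.
exact: (differentiable_uptoD oU (IH _ _ df dgD) (IH _ _ dg dfD) sz Ux).
Qed.

End DifferentiableUptoM.

Lemma smooth_onP (R : realType) (m : nat) (V : normedModType R) (U : set 'rV[R]_m)
    (f : 'rV[R]_m -> V) :
  smooth_on U f <-> open U /\ forall k, differentiable_upto U k f.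
Proof.
split=> -[oU df]; split=> //; first by move=> k vs _; exact: df.
by move=> vs; exact: (df (size vs)).
Qed.

Section SmoothFunctions.
Context {R : realType} {m : nat} {M : topologicalType} (A : smooth_atlas R m M).
Implicit Types (f g : M -> R).

Lemma smooth_cst (c : R) : smooth A (fun _ => c).
Proof.
move=> i; apply/smooth_onP; split=> [|k]; first exact: cimg_open.
exact: differentiable_upto_cst.
Qed.

Lemma smoothD f g : smooth A f -> smooth A g -> smooth A (fun x => f x + g x).
Proof.
move=> sf sg i; have /smooth_onP[oU df] := sf i; have /smooth_onP[_ dg] := sg i.
by apply/smooth_onP; split=> // k; exact: differentiable_uptoD.
Qed.

Lemma smoothM f g : smooth A f -> smooth A g -> smooth A (fun x => f x * g x).
Proof.
move=> sf sg i; have /smooth_onP[oU df] := sf i; have /smooth_onP[_ dg] := sg i.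
by apply/smooth_onP; split=> // k; exact: differentiable_uptoM.
Qed.

Lemma smoothN f : smooth A f -> smooth A (fun x => - f x).
Proof.
move=> sf; have -> : (fun x => - f x) = (fun x => -1 * f x).
  by apply/funext => x; rewrite mulN1r.
by apply: smoothM => //; exact: smooth_cst.
Qed.

Lemma smoothB f g : smooth A f -> smooth A g -> smooth A (fun x => f x - g x).
Proof. by move=> sf sg; apply: smoothD => //; exact: smoothN. Qed.

End SmoothFunctions.

Lemma vfield_eqP (R : realType) (M : topologicalType) (X Y : @vfield R M) :
  X = Y <-> forall g x, X g x = Y g x.
Proof. by split=> [-> // | XY]; apply/funext => g; apply/funext => x. Qed.

Section VfieldAlgebra.
Context {R : realType} {M : topologicalType}.
Implicit Types X : @vfield R M.

Lemma vscale1 X : vscale (fun _ => 1) X = X.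
Proof. by apply/vfield_eqP => g x; rewrite /vscale mul1r. Qed.

Lemma vaddv0 X : vadd X vzero = X.
Proof. by apply/vfield_eqP => g x; rewrite /vadd /vzero addr0. Qed.

Lemma vopp_scale X : vopp X = vscale (fun _ => -1) X.
Proof. by apply/vfield_eqP => g x; rewrite /vscale /vopp mulN1r. Qed.

End VfieldAlgebra.

Section Manifold.
Context {R : realType} {m : nat} {M : topologicalType} (A : smooth_atlas R m M).
Local Notation smooth := (smooth A).
Local Notation is_vf := (is_vf A).
Implicit Types (f g h : M -> R) (X Y Z V W : @vfield R M).

Lemma vf_nsmooth X g : is_vf X -> ~ smooth g -> X g = (fun _ => 0).
Proof. by case=> + _ _ _; apply. Qed.

Lemma vf_smooth X g : is_vf X -> smooth g -> smooth (X g).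
Proof. by case=> _ + _ _; apply. Qed.

Lemma vf_linear X (a : R) g h : is_vf X -> smooth g -> smooth h ->
  X (fun x => a * g x + h x) = (fun x => a * X g x + X h x).
Proof. by case=> _ _ + _; apply. Qed.

Lemma vf_leibniz X g h : is_vf X -> smooth g -> smooth h ->
  X (fun x => g x * h x) = (fun x => g x * X h x + h x * X g x).
Proof. by case=> _ _ _; apply. Qed.

Lemma vf0 X : is_vf X -> X (fun _ => 0) = (fun _ => 0).
Proof.
move=> vX; have := vf_linear 1 vX (smooth_cst 0) (smooth_cst 0).
rewrite (_ : (fun _ => 1 * 0 + 0) = (fun _ => 0)); last by apply/funext => x; rewrite mulr0 addr0.
by move=> X0; apply/funext => x; move/(congr1 (fun F => F x)): X0 => /=; lra.
Qed.

Lemma vfD X g h : is_vf X -> smooth g -> smooth h ->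
  X (fun x => g x + h x) = (fun x => X g x + X h x).
Proof.
move=> vX sg sh.
have -> : (fun x => g x + h x) = (fun x => 1 * g x + h x) by apply/funext => x; rewrite mul1r.
by rewrite (vf_linear 1 vX sg sh); apply/funext => x; rewrite mul1r.
Qed.

Lemma vfZ X (a : R) g : is_vf X -> smooth g ->
  X (fun x => a * g x) = (fun x => a * X g x).
Proof.
move=> vX sg.
have -> : (fun x => a * g x) = (fun x => a * g x + 0) by apply/funext => x; rewrite addr0.
by rewrite (vf_linear a vX sg (smooth_cst 0)) vf0 //; apply/funext => x; rewrite addr0.
Qed.

Lemma vfN X g : is_vf X -> smooth g -> X (fun x => - g x) = (fun x => - X g x).
Proof.
move=> vX sg.
have -> : (fun x => - g x) = (fun x => -1 * g x) by apply/funext => x; rewrite mulN1r.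
by rewrite vfZ //; apply/funext => x; rewrite mulN1r.
Qed.

Lemma vfB X g h : is_vf X -> smooth g -> smooth h ->
  X (fun x => g x - h x) = (fun x => X g x - X h x).
Proof. by move=> vX sg sh; rewrite vfD ?vfN //; exact: smoothN. Qed.

(* Uses the normalization [X g = 0] for non-smooth [g]. *)
Lemma vf_ext X Y : is_vf X -> is_vf Y -> (forall g, smooth g -> X g = Y g) -> X = Y.
Proof.
move=> vX vY XY; apply/funext => g; have [/XY // | ng] := pselect (smooth g).
by rewrite (vf_nsmooth vX ng) (vf_nsmooth vY ng).
Qed.

Lemma is_vf0 : is_vf (@vzero R M).
Proof.
split=> [g _ // | g _ | a g h _ _ | g h _ _]; first exact: smooth_cst.
  by apply/funext => x; rewrite /vzero; ring.
by apply/funext => x; rewrite /vzero; ring.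
Qed.

Lemma is_vfD X Y : is_vf X -> is_vf Y -> is_vf (vadd X Y).
Proof.
move=> vX vY; split=> [g ng | g sg | a g h sg sh | g h sg sh]; rewrite /vadd.
- by rewrite (vf_nsmooth vX ng) (vf_nsmooth vY ng); apply/funext => x; rewrite addr0.
- by apply: smoothD; exact: vf_smooth.
- by rewrite (vf_linear _ vX) // (vf_linear _ vY) //; apply/funext => x; ring.
- by rewrite (vf_leibniz vX) // (vf_leibniz vY) //; apply/funext => x; ring.
Qed.

Lemma is_vfS f X : smooth f -> is_vf X -> is_vf (vscale f X).
Proof.
move=> sf vX; split=> [g ng | g sg | a g h sg sh | g h sg sh]; rewrite /vscale.
- by rewrite (vf_nsmooth vX ng); apply/funext => x; rewrite mulr0.
- by apply: smoothM => //; exact: vf_smooth.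
- by rewrite (vf_linear _ vX) //; apply/funext => x; ring.
- by rewrite (vf_leibniz vX) //; apply/funext => x; ring.
Qed.

Lemma is_vfZ (c : R) X : is_vf X -> is_vf (rscale c X).
Proof. exact: (is_vfS (smooth_cst c)). Qed.

Lemma is_vfN X : is_vf X -> is_vf (vopp X).
Proof.
by move=> vX; rewrite vopp_scale; exact: is_vfS (smooth_cst _) vX.
Qed.

Lemma is_vf_br X Y : is_vf X -> is_vf Y -> is_vf (vbr X Y).
Proof.
move=> vX vY; have sXY g : smooth g -> smooth (X (Y g)) /\ smooth (Y (X g)).
  by move=> sg; split; do 2!apply: vf_smooth => //.
split=> [g ng | g sg | a g h sg sh | g h sg sh]; rewrite /vbr.
- rewrite (vf_nsmooth vX ng) (vf_nsmooth vY ng) (vf0 vX) (vf0 vY).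
  by apply/funext => x; rewrite subrr.
- by have [] := sXY g sg; exact: smoothB.
- rewrite (vf_linear _ vX) // (vf_linear _ vY) //.
  rewrite (vf_linear _ vX) ?(vf_linear _ vY); try exact: vf_smooth.
  by apply/funext => x; ring.
- have sXg := vf_smooth vX sg; have sXh := vf_smooth vX sh.
  have sYg := vf_smooth vY sg; have sYh := vf_smooth vY sh.
  rewrite (vf_leibniz vX sg sh) (vf_leibniz vY sg sh).
  rewrite (vfD vX) ?(vfD vY); try by apply: smoothM.
  rewrite (vf_leibniz vX sg sYh) (vf_leibniz vX sh sYg).
  rewrite (vf_leibniz vY sg sXh) (vf_leibniz vY sh sXg).
  by apply/funext => x; ring.
Qed.

Section Tensor.
Variable phi : @vfield R M -> @vfield R M.
Hypothesis phiT : is_tensor11 A phi.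

Lemma tensor_vf X : is_vf X -> is_vf (phi X).
Proof. by case: phiT => + _; apply. Qed.

Lemma tensorD X Y : is_vf X -> is_vf Y -> phi (vadd X Y) = vadd (phi X) (phi Y).
Proof.
move=> vX vY; case: phiT => _ lin.
by rewrite -{1}(vscale1 X) lin ?vscale1 //; exact: smooth_cst.
Qed.

Lemma tensor0 : phi vzero = vzero.
Proof.
have := tensorD is_vf0 is_vf0; rewrite vaddv0 => /vfield_eqP phi00.
by apply/vfield_eqP => g x; have := phi00 g x; rewrite /vadd /vzero; lra.
Qed.

Lemma tensorS f X : smooth f -> is_vf X -> phi (vscale f X) = vscale f (phi X).
Proof.
move=> sf vX; case: phiT => _ lin.
by rewrite -[vscale f X]vaddv0 lin ?tensor0 ?vaddv0 //; exact: is_vf0.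
Qed.

Lemma tensorN X : is_vf X -> phi (vopp X) = vopp (phi X).
Proof. by move=> vX; rewrite !vopp_scale tensorS //; exact: smooth_cst. Qed.

End Tensor.

Section OneForm.
Variable eta : @vfield R M -> (M -> R).
Hypothesis etaF : is_1form A eta.

Lemma form_smooth X : is_vf X -> smooth (eta X).
Proof. by case: etaF => + _; apply. Qed.

Lemma formD X Y : is_vf X -> is_vf Y -> eta (vadd X Y) = (fun x => eta X x + eta Y x).
Proof.
move=> vX vY; case: etaF => _ lin.
rewrite -{1}(vscale1 X) lin //; last exact: smooth_cst.
by apply/funext => x; rewrite mul1r.
Qed.

Lemma form0 : eta vzero = (fun _ => 0).
Proof.
have := formD is_vf0 is_vf0; rewrite vaddv0 => eta00.
by apply/funext => x; move/(congr1 (fun F => F x)): eta00 => /=; lra.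
Qed.

Lemma formS f X : smooth f -> is_vf X -> eta (vscale f X) = (fun x => f x * eta X x).
Proof.
move=> sf vX; case: etaF => _ lin.
rewrite -[vscale f X]vaddv0 lin ?form0 //; last exact: is_vf0.
by apply/funext => x; rewrite addr0.
Qed.

Lemma formN X : is_vf X -> eta (vopp X) = (fun x => - eta X x).
Proof.
move=> vX; rewrite vopp_scale formS //; last exact: smooth_cst.
by apply/funext => x; rewrite mulN1r.
Qed.

End OneForm.
Ltac solve_smooth := repeat first
  [ assumption
  | match goal with
    | T : is_tensor11 _ ?phi |- Defs.is_vf _ (?phi _) => apply: (tensor_vf T)
    | F : is_1form _ ?eta |- Defs.smooth _ (?eta _) => apply: (form_smooth F)
    end
  | exact: is_vf0 | apply: is_vf_br | apply: is_vfD | apply: is_vfN | apply: is_vfZ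
  | apply: is_vfS | exact: smooth_cst | apply: vf_smooth
  | apply: smoothD | apply: smoothM | apply: smoothB | apply: smoothN ].

Lemma vbr0l V : is_vf V -> vbr vzero V = vzero.
Proof. by move=> vV; apply/vfield_eqP => g x; rewrite /vbr /vzero (vf0 vV) subrr. Qed.

Lemma vbr0r X : is_vf X -> vbr X vzero = vzero.
Proof. by move=> vX; apply/vfield_eqP => g x; rewrite /vbr /vzero (vf0 vX) subrr. Qed.

Lemma vbrDl X Z V : is_vf X -> is_vf Z -> is_vf V ->
  vbr (vadd X Z) V = vadd (vbr X V) (vbr Z V).
Proof.
move=> vX vZ vV; apply: vf_ext; solve_smooth; move=> g sg.
rewrite /vbr /vadd (vfD vV (vf_smooth vX sg) (vf_smooth vZ sg)).
by apply/funext => x; ring.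
Qed.

Lemma vbrDr X V W : is_vf X -> is_vf V -> is_vf W ->
  vbr X (vadd V W) = vadd (vbr X V) (vbr X W).
Proof.
move=> vX vV vW; apply: vf_ext; solve_smooth; move=> g sg.
rewrite /vbr /vadd (vfD vX (vf_smooth vV sg) (vf_smooth vW sg)).
by apply/funext => x; ring.
Qed.

Lemma vbrNr X V : is_vf X -> is_vf V -> vbr X (vopp V) = vopp (vbr X V).
Proof.
move=> vX vV; apply: vf_ext; solve_smooth; move=> g sg.
rewrite /vbr /vopp (vfN vX (vf_smooth vV sg)).
by apply/funext => x; ring.
Qed.

Lemma vbrZl (c : R) X V : is_vf X -> is_vf V -> vbr (rscale c X) V = rscale c (vbr X V).
Proof.
move=> vX vV; apply: vf_ext; solve_smooth; move=> g sg.
rewrite /vbr /rscale (vfZ _ vV (vf_smooth vX sg)).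
by apply/funext => x; ring.
Qed.

Lemma vbrSr X f V : is_vf X -> smooth f -> is_vf V ->
  vbr X (vscale f V) = vadd (vscale (X f) V) (vscale f (vbr X V)).
Proof.
move=> vX sf vV; apply: vf_ext; solve_smooth; move=> g sg.
rewrite /vbr /vscale /vadd (vf_leibniz vX sf (vf_smooth vV sg)).
by apply/funext => x; ring.
Qed.

Lemma vbr_jacobi X Z V : is_vf X -> is_vf Z -> is_vf V ->
  vbr (vbr X Z) V = vadd (vbr X (vbr Z V)) (vopp (vbr Z (vbr X V))).
Proof.
move=> vX vZ vV; apply: vf_ext; solve_smooth; move=> g sg.
have sXZg := vf_smooth vX (vf_smooth vZ sg); have sZXg := vf_smooth vZ (vf_smooth vX sg).
have sZVg := vf_smooth vZ (vf_smooth vV sg); have sVZg := vf_smooth vV (vf_smooth vZ sg).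
have sXVg := vf_smooth vX (vf_smooth vV sg); have sVXg := vf_smooth vV (vf_smooth vX sg).
rewrite /vbr /vadd /vopp (vfB vV sXZg sZXg) (vfB vX sZVg sVZg) (vfB vZ sXVg sVXg).
by apply/funext => x; ring.
Qed.

Section LieDerivative.
Variable phi : @vfield R M -> @vfield R M.
Hypothesis phiT : is_tensor11 A phi.

Lemma lie_phi0l Y : is_vf Y -> lie_phi phi vzero Y = vzero.
Proof.
move=> vY; rewrite /lie_phi !vbr0l ?(tensor0 phiT) //; solve_smooth.
by apply/vfield_eqP => g x; rewrite /vadd /vopp /vzero oppr0 addr0.
Qed.

Lemma lie_phiDl X Z Y : is_vf X -> is_vf Z -> is_vf Y ->
  lie_phi phi (vadd X Z) Y = vadd (lie_phi phi X Y) (lie_phi phi Z Y).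
Proof.
move=> vX vZ vY; rewrite /lie_phi !vbrDl //; solve_smooth.
rewrite (tensorD phiT (is_vf_br vX vY) (is_vf_br vZ vY)).
by apply/vfield_eqP => g x; rewrite /vadd /vopp; ring.
Qed.

Lemma lie_phiZl (c : R) X Y : is_vf X -> is_vf Y ->
  lie_phi phi (rscale c X) Y = rscale c (lie_phi phi X Y).
Proof.
move=> vX vY; rewrite /lie_phi !vbrZl //; solve_smooth.
rewrite (tensorS phiT (smooth_cst c) (is_vf_br vX vY)).
by apply/vfield_eqP => g x; rewrite /vadd /vopp /rscale /vscale; ring.
Qed.

Lemma lie_phi_br X Z Y : is_vf X -> is_vf Z -> is_vf Y ->
  lie_phi phi (vbr X Z) Y =
  vadd (vadd (vbr X (lie_phi phi Z Y)) (vopp (vbr Z (lie_phi phi X Y))))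
       (vadd (lie_phi phi X (vbr Z Y)) (vopp (lie_phi phi Z (vbr X Y)))).
Proof.
move=> vX vZ vY; have vPY := tensor_vf phiT vY.
have vZY := is_vf_br vZ vY; have vXY := is_vf_br vX vY.
have vPZY := tensor_vf phiT vZY; have vPXY := tensor_vf phiT vXY.
rewrite /lie_phi (vbr_jacobi vX vZ vPY) (vbr_jacobi vX vZ vY).
rewrite (tensorD phiT (is_vf_br vX vZY) (is_vfN (is_vf_br vZ vXY))).
rewrite (tensorN phiT (is_vf_br vZ vXY)).
rewrite (vbrDr vX (is_vf_br vZ vPY) (is_vfN vPZY)) (vbrNr vX vPZY).
rewrite (vbrDr vZ (is_vf_br vX vPY) (is_vfN vPXY)) (vbrNr vZ vPXY).
by apply/vfield_eqP => g x; rewrite /vadd /vopp; ring.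
Qed.

End LieDerivative.

Section AlmostContact.
Variables (phi : @vfield R M -> @vfield R M) (xi : @vfield R M) (eta : @vfield R M -> (M -> R)).
Hypotheses (phiT : is_tensor11 A phi) (xiV : is_vf xi) (etaF : is_1form A eta).
Hypothesis phi2 : forall X, is_vf X -> phi (phi X) = vadd (vopp X) (vscale (eta X) xi).
Hypothesis eta_xi : eta xi = (fun _ => 1).
Local Notation contact_hol := (contact_hol A phi xi eta).

(* phi^2 xi = 0 forces phi xi = c xi, and then 0 = phi^2 xi = c^2 xi. *)
Lemma phi_xi : phi xi = vzero.
Proof.
have phi2xi : phi (phi xi) = vzero.
  by rewrite phi2 // eta_xi; apply/vfield_eqP => g x; rewrite /vadd /vopp /vscale /vzero; ring.
have [c sc phixi] : exists2 c, smooth c & phi xi = vscale c xi.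
  exists (eta (phi xi)); first by solve_smooth.
  have := phi2 (tensor_vf phiT xiV); rewrite phi2xi (tensor0 phiT) => /vfield_eqP e.
  by apply/vfield_eqP => g x; have := e g x; rewrite /vadd /vopp /vscale /vzero; lra.
have c0 x : c x = 0.
  have := congr1 eta phi2xi; rewrite phixi (tensorS phiT sc xiV) phixi.
  rewrite (form0 etaF) (formS etaF sc (is_vfS sc xiV)) (formS etaF sc xiV) eta_xi.
  by move/(congr1 (fun F => F x)) => /= /eqP; rewrite mulr1 mulf_eq0 orbb => /eqP.
by apply/vfield_eqP => g x; rewrite phixi /vscale /vzero c0 mul0r.
Qed.

(* Compute phi^3 X as phi (phi^2 X) and as phi^2 (phi X). *)
Lemma eta_phi X : is_vf X -> eta (phi X) = (fun _ => 0).
Proof.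
move=> vX; have vPX := tensor_vf phiT vX.
have := phi2 vPX; rewrite (phi2 vX) (tensorD phiT (is_vfN vX) (is_vfS (form_smooth etaF vX) xiV)).
rewrite (tensorN phiT vX) (tensorS phiT (form_smooth etaF vX) xiV) phi_xi => /vfield_eqP e.
have etaPX : vscale (eta (phi X)) xi = vzero.
  by apply/vfield_eqP => g x; have := e g x; rewrite /vadd /vopp /vscale /vzero; lra.
have := congr1 eta etaPX; rewrite (formS etaF (form_smooth etaF vPX) xiV) eta_xi (form0 etaF).
by move=> eta0; apply/funext => x; have := congr1 (fun F => F x) eta0; rewrite /= mulr1.
Qed.

Definition along_xi V := exists2 c, smooth c & V = vscale c xi.

Lemma along_xi0 : along_xi vzero.
Proof.
exists (fun _ => 0); first exact: smooth_cst.
by apply/vfield_eqP => g x; rewrite /vzero /vscale mul0r.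
Qed.

Lemma along_xiD V W : along_xi V -> along_xi W -> along_xi (vadd V W).
Proof.
move=> [c sc ->] [d sd ->]; exists (fun x => c x + d x); first exact: smoothD.
by apply/vfield_eqP => g x; rewrite /vadd /vscale mulrDl.
Qed.

Lemma along_xiN V : along_xi V -> along_xi (vopp V).
Proof.
move=> [c sc ->]; exists (fun x => - c x); first exact: smoothN.
by apply/vfield_eqP => g x; rewrite /vopp /vscale mulNr.
Qed.

Lemma along_xiZ (a : R) V : along_xi V -> along_xi (rscale a V).
Proof.
move=> [c sc ->]; exists (fun x => a * c x); first by solve_smooth.
by apply/vfield_eqP => g x; rewrite /rscale /vscale mulrA.
Qed.

Lemma along_xi_br X V : is_vf X -> along_xi (vbr X xi) -> along_xi V -> along_xi (vbr X V).
Proof.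
move=> vX [a sa Xxi] [c sc ->]; exists (fun x => X c x + c x * a x); first by solve_smooth.
rewrite (vbrSr vX sc xiV) Xxi.
by apply/vfield_eqP => g x; rewrite /vadd /vscale; ring.
Qed.

Lemma along_xi_phi V : is_vf V -> along_xi (phi V) -> along_xi V.
Proof.
move=> vV [c sc phiV]; exists (eta V); first by solve_smooth.
have := phi2 vV; rewrite phiV (tensorS phiT sc xiV) phi_xi => /vfield_eqP e.
by apply/vfield_eqP => g x; have := e g x; rewrite /vadd /vopp /vscale /vzero; lra.
Qed.

Lemma eta_lie_phi X Y : is_vf X -> is_vf Y ->
  eta (lie_phi phi X Y) = eta (vbr X (phi Y)).
Proof.
move=> vX vY; have vXY := is_vf_br vX vY; have vPXY := tensor_vf phiT vXY.
rewrite /lie_phi (formD etaF (is_vf_br vX (tensor_vf phiT vY)) (is_vfN vPXY)).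
by rewrite (formN etaF vPXY) (eta_phi vXY); apply/funext => x; rewrite oppr0 addr0.
Qed.

Lemma contact_holP X : is_vf X ->
  contact_hol X <-> forall Y, is_vf Y -> along_xi (lie_phi phi X Y).
Proof.
move=> vX; split=> [[_ holX] Y vY | alongX].
  by exists (eta (vbr X (phi Y))); [solve_smooth | exact: holX].
split=> // Y vY; have [c sc LXY] := alongX Y vY.
suff -> : eta (vbr X (phi Y)) = c by [].
rewrite -(eta_lie_phi vX vY) LXY (formS etaF sc xiV) eta_xi.
by apply/funext => x; rewrite mulr1.
Qed.

Lemma contact_hol_br_xi X : contact_hol X -> along_xi (vbr X xi).
Proof.
move=> holX; have [vX _] := holX; apply: along_xi_phi; first by solve_smooth.
have := along_xiN ((contact_holP vX).1 holX xi xiV).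
rewrite /lie_phi phi_xi (vbr0r vX).
suff -> : vopp (vadd vzero (vopp (phi (vbr X xi)))) = phi (vbr X xi) by [].
by apply/vfield_eqP => g x; rewrite /vopp /vadd /vzero add0r opprK.
Qed.

Lemma contact_hol0 : contact_hol vzero.
Proof.
apply/(contact_holP is_vf0) => Y vY.
by rewrite (lie_phi0l phiT vY); exact: along_xi0.
Qed.

Lemma contact_holD X Z : contact_hol X -> contact_hol Z -> contact_hol (vadd X Z).
Proof.
move=> holX holZ; have [vX _] := holX; have [vZ _] := holZ.
apply/(contact_holP (is_vfD vX vZ)) => Y vY; rewrite (lie_phiDl phiT vX vZ vY).
by apply: along_xiD; [exact: (contact_holP vX).1 | exact: (contact_holP vZ).1].
Qed.

Lemma contact_holZ (c : R) X : contact_hol X -> contact_hol (rscale c X).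
Proof.
move=> holX; have [vX _] := holX.
apply/(contact_holP (is_vfZ c vX)) => Y vY; rewrite (lie_phiZl phiT c vX vY).
by apply: along_xiZ; exact: (contact_holP vX).1.
Qed.

Lemma contact_hol_br X Z : contact_hol X -> contact_hol Z -> contact_hol (vbr X Z).
Proof.
move=> holX holZ; have [vX _] := holX; have [vZ _] := holZ.
have LX := (contact_holP vX).1 holX; have LZ := (contact_holP vZ).1 holZ.
apply/(contact_holP (is_vf_br vX vZ)) => Y vY; rewrite (lie_phi_br phiT vX vZ vY).
apply: along_xiD; apply: along_xiD.
- exact: (along_xi_br vX (contact_hol_br_xi holX) (LZ Y vY)).
- exact: along_xiN (along_xi_br vZ (contact_hol_br_xi holZ) (LX Y vY)).
- exact: (LX _ (is_vf_br vZ vY)).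
- exact: along_xiN (LZ _ (is_vf_br vX vY)).
Qed.

End AlmostContact.

End Manifold.

Theorem proposition3p1 (R : realType) (n : nat) (M : topologicalType)
    (hM : hausdorff_space M) (scM : @second_countable M)
    (A : smooth_atlas R (2 * n + 1) M)
    (phi : @vfield R M -> @vfield R M) (xi : @vfield R M) (eta : @vfield R M -> (M -> R))
    (hac : almost_contact A phi xi eta) (hnormal : normal_ac A phi xi eta) :
  lie_subalgebra A (contact_hol A phi xi eta).
Proof.
have [phiT xiV etaF phi2 eta_xi] := hac.
split.
- by move=> X [].
- exact: contact_hol0.
- exact: contact_holD.
- exact: contact_holZ.
- exact: contact_hol_br.
Qed.
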